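(* Let $S=\{\pi_1,\pi_2,\pi_3\}$ be a linearly dependent set of three non-trivial permutations with $|\pi_1|\ge|\pi_2|\ge|\pi_3|$. If $|\pi_1|>3$, then $|\pi_2|=|\pi_3|=2$.
   Context: A $k$-permutation is a bijection of $[k]=\{1,\dots,k\}$; $|\pi|$ denotes its order, and a permutation is non-trivial if its order is at least two. The gradient polynomial of a $k$-permutation $\pi$ is $P_\pi(\alpha,\beta)=k!\sum_{m\in[k]}\left(\frac{k-m}{1-\alpha}-\frac{m-1}{\alpha}\right)\left(\frac{k-\pi(m)}{1-\beta}-\frac{\pi(m)-1}{\beta}\right)\frac{\alpha^{m-1}(1-\alpha)^{k-m}\beta^{\pi(m)-1}(1-\beta)^{k-\pi(m)}}{(m-1)!(k-m)!(\pi(m)-1)!(k-\pi(m))!}$. A set $S$ of (distinct) permutations is linearly dependent if the gradient polynomials $P_\pi$, $\pi\in S$, are linearly dependent over $\mathbb{R}$. *)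

From HB Require Import structures.
From mathcomp Require Import all_boot all_order all_algebra all_fingroup.
From mathcomp Require Import reals.
Set Implicit Arguments. Unset Strict Implicit. Unset Printing Implicit Defensive.
Import Order.TTheory GRing.Theory Num.Theory.
Local Open Scope ring_scope.

(* A k-permutation is a p : 'S_k; the element m in [k] = {1..k} is encoded by
   i : 'I_k with m = i + 1, and pi(m) = p i + 1. *)

(* A permutation of arbitrary size: the pair (k, p) with p a k-permutation.
   |pi| (the order of pi) is the size k. *)
Definition anyperm := {k : nat & 'S_k}.
Definition porder (s : anyperm) : nat := projT1 s.

Definition gradpoly_k {R : realType} (k : nat) (p : 'S_k) (a b : R) : R :=
  (k `!)%:R * \sum_(i < k)
    ( ((k - i.+1)%:R / (1 - a) - (i : nat)%:R / a)
    * ((k - (p i).+1)%:R / (1 - b) - (p i : nat)%:R / b)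
    * (a ^+ i * (1 - a) ^+ (k - i.+1) * b ^+ (p i) * (1 - b) ^+ (k - (p i).+1))
    / ((i `!)%:R * ((k - i.+1) `!)%:R * ((p i : nat) `!)%:R * ((k - (p i).+1) `!)%:R)).

Definition gradpoly {R : realType} (s : anyperm) (a b : R) : R :=
  gradpoly_k (projT2 s) a b.

(* Linear dependence over R of three gradient polynomials (as functions on the
   open unit square, where the defining formula is meaningful; since these are
   polynomials, this is equivalent to dependence as polynomials). *)
Definition lin_dep3 (R : realType) (s1 s2 s3 : anyperm) : Prop :=
  exists c1 c2 c3 : R, [\/ c1 != 0, c2 != 0 | c3 != 0] /\
    forall a b : R, 0 < a < 1 -> 0 < b < 1 ->
      c1 * gradpoly s1 a b + c2 * gradpoly s2 a b + c3 * gradpoly s3 a b = 0.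

From mathcomp Require Import all_boot all_order all_algebra all_fingroup.
From mathcomp Require Import reals.
From mathcomp Require Import ring zify.
Set Implicit Arguments. Unset Strict Implicit. Unset Printing Implicit Defensive.
Import Order.TTheory GRing.Theory Num.Theory.
Local Open Scope ring_scope.

(* Write n = k - 1 and B_{n,i} = C(n,i) X^i (1-X)^(n-i) for the Bernstein basis. Up to the
   factor (n+1)!/n!^2, the gradient polynomial of a k-permutation p is the bilinear form
   sum_i B'_{n,i}(a) B'_{n,p(i)}(b). The only linear relation among the B'_{N,i} is that they
   sum to zero, so a form sum_{i,l} Y_{il} B'_{N,i}(a) B'_{N,l}(b) vanishes exactly when
   Y_{il} = f(i) + g(l). Degree elevation rewrites the forms of smaller permutations in
   degree N, the largest one; their matrices are blind to the leading coefficients of the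
   B_{N,l}, which sum to zero without being constant, so a permutation of strictly largest
   size must have coefficient zero, and one recurses. What remains is combinatorics: a
   matrix f(i) + g(l) with constant row and column sums is constant, while no nontrivial
   combination of two permutation matrices of size at least 3, of three of size at least 4,
   or of two of size N+1 together with an elevated smaller one, is constant. *)

Lemma bin_trinomial n N j i : (j <= n)%N -> (n <= N)%N -> (j <= i)%N ->
  (i - j <= N - n)%N ->
  ('C(i, j) * 'C(N - i, n - j) * 'C(N, i) = 'C(n, j) * 'C(N - n, i - j) * 'C(N, n))%N.
Proof.
move=> le_jn le_nN le_ji le_ij; set t := (i - j)%N; set e := (N - n - t)%N.
have fact_i : ('C(i, j) * (j`! * t`!))%N = i`! by rewrite bin_fact.
have fact_Ni : ('C(N - i, n - j) * ((n - j)`! * e`!))%N = (N - i)`!.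
  have -> : e = (N - i - (n - j))%N by rewrite /e /t; lia.
  by rewrite bin_fact //; lia.
have fact_Ni' : ('C(N, i) * (i`! * (N - i)`!))%N = N`! by rewrite bin_fact //; lia.
have fact_n : ('C(n, j) * (j`! * (n - j)`!))%N = n`! by rewrite bin_fact.
have fact_Nn : ('C(N - n, t) * (t`! * e`!))%N = (N - n)`! by rewrite bin_fact.
have fact_Nn' : ('C(N, n) * (n`! * (N - n)`!))%N = N`! by rewrite bin_fact.
have fact_gt0 : (0 < j`! * t`! * ((n - j)`! * e`!))%N by rewrite !muln_gt0 !fact_gt0.
apply/eqP; rewrite -(eqn_pmul2r fact_gt0); apply/eqP.
transitivity N`!; first by rewrite -fact_Ni' -fact_i -fact_Ni; ring.
by rewrite -fact_Nn' -fact_n -fact_Nn; ring.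
Qed.

Lemma Vandermonde_upper N j m :
  (\sum_(l < N.+1) 'C(l, j) * 'C(N - l, m) = 'C(N.+1, (j + m).+1))%N.
Proof.
elim: N m => [|N IH] m.
  by rewrite big_ord1 binS !bin0n; case: j => [|j]; case: m.
rewrite big_ord_recr subnn bin0n; case: m => [|m].
  rewrite muln1 addn0 [RHS]binS; have := IH 0%N; rewrite addn0 => <-.
  by congr (_ + _)%N; apply: eq_bigr => l _; rewrite !bin0.
rewrite muln0 -[RHS]addn0; congr (_ + _)%N.
rewrite [RHS]binS addnS -IH; have := IH m.+1; rewrite addnS => <-.
rewrite -big_split /=.
by apply: eq_bigr => l _; rewrite subSn ?binS ?mulnDr // -ltnS.
Qed.

Lemma ltn_bin2l n1 n2 k : (0 < k)%N -> (k <= n1)%N -> (n1 < n2)%N ->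
  ('C(n1, k) < 'C(n2, k))%N.
Proof.
case: k => // k _ le_kn1 lt_n12; apply: leq_trans (leq_bin2l _ lt_n12).
by rewrite binS -addn1 leq_add2l bin_gt0; lia.
Qed.

Lemma exists_notin (T : eqType) (s t : seq T) : uniq t -> (size s < size t)%N ->
  exists2 x, x \in t & x \notin s.
Proof.
move=> uniq_t lt_st; apply/hasP; apply: contraLR lt_st => /hasPn t_sub_s.
by rewrite -leqNgt uniq_leq_size // => x /t_sub_s; rewrite negbK.
Qed.

Lemma bin_inj k m1 m2 : (0 < k)%N -> (0 < 'C(m1, k))%N -> 'C(m1, k) = 'C(m2, k) -> m1 = m2.
Proof.
move=> k_gt0 bin1_gt0 eq_bin; have bin2_gt0 : (0 < 'C(m2, k))%N by rewrite -eq_bin.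
rewrite !bin_gt0 in bin1_gt0 bin2_gt0.
case: (ltngtP m1 m2) => // [lt_m12|lt_m21].
  by have := ltn_bin2l k_gt0 bin1_gt0 lt_m12; rewrite eq_bin ltnn.
by have := ltn_bin2l k_gt0 bin2_gt0 lt_m21; rewrite eq_bin ltnn.
Qed.

(** * Bernstein polynomials and degree elevation *)

Section Bernstein.
Variable R : numFieldType.

Definition bernstein N i : {poly R} := 'C(N, i)%:R *: ('X^i * (1 - 'X) ^+ (N - i)).

Lemma sum_bernstein N : \sum_(i < N.+1) bernstein N i = 1.
Proof.
have := exprDn (1 - 'X : {poly R}) 'X N; rewrite subrK expr1n => ->.
by apply: eq_bigr => i _; rewrite /bernstein scaler_nat mulrC.
Qed.

Lemma coef_bernstein_lt N i m : (m < i)%N -> (bernstein N i)`_m = 0.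
Proof. by move=> lt_mi; rewrite coefZ coefXnM lt_mi mulr0. Qed.

Lemma coef_bernstein_id N i : (bernstein N i)`_i = 'C(N, i)%:R.
Proof.
rewrite coefZ coefXnM ltnn subnn -horner_coef0 horner_exp !hornerE.
by rewrite subr0 expr1n mulr1.
Qed.

Lemma coef_bernstein_gt n j m : (j <= n)%N -> (n < m)%N -> (bernstein n j)`_m = 0.
Proof.
move=> le_jn lt_nm; rewrite coefZ coefXnM; case: ifP => _; first by rewrite mulr0.
have size_1subX : size (1 - 'X : {poly R}) = 2%N.
  by rewrite -opprB size_polyN -polyC1 size_XsubC.
rewrite nth_default ?mulr0 //; apply: leq_trans (size_poly_exp_leq _ _) _.
by rewrite size_1subX; lia.
Qed.

Lemma bernstein_free N (y : nat -> R) :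
  \sum_(i < N.+1) y i *: bernstein N i = 0 -> forall i, (i <= N)%N -> y i = 0.
Proof.
move=> Hy m; elim/ltn_ind: m => m IH le_mN.
have := congr1 (fun p : {poly R} => p`_m) Hy; rewrite coef_sum coef0.
rewrite (bigD1 (Ordinal (le_mN : (m < N.+1)%N))) //= big1 => [|i ne_im].
  rewrite addr0 coefZ coef_bernstein_id => /eqP.
  by rewrite mulf_eq0 pnatr_eq0 eqn0Ngt bin_gt0 le_mN orbF => /eqP.
rewrite coefZ; case: (ltngtP i m) => [lt_im|lt_mi|eq_im].
- by rewrite IH ?mul0r // -ltnS.
- by rewrite coef_bernstein_lt ?mulr0.
- by move: ne_im; rewrite -val_eqE /= eq_im eqxx.
Qed.

Lemma deriv_eq0_const (p : {poly R}) : p^`() = 0 -> p = (p`_0)%:P.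
Proof.
move=> Dp0; apply/polyP => [[|i]]; rewrite coefC //=.
have := congr1 (fun q : {poly R} => q`_i) Dp0; rewrite coef_deriv coef0 => /eqP.
by rewrite mulrn_eq0 /= => /eqP.
Qed.

Definition dbernstein N i := (bernstein N i)^`().

Lemma dbernstein_kernel N (x : nat -> R) :
  \sum_(i < N.+1) x i *: dbernstein N i = 0 -> forall i, (i <= N)%N -> x i = x 0%N.
Proof.
move=> Hx; set q := \sum_(i < N.+1) x i *: bernstein N i.
have /deriv_eq0_const q_const : q^`() = 0.
  by rewrite /q linear_sum -[RHS]Hx; apply: eq_bigr => i _; rewrite linearZ.
have Hxc : \sum_(i < N.+1) (x i - q`_0) *: bernstein N i = 0.
  under eq_bigr do rewrite scalerBl.
  by rewrite sumrB -/q {1}q_const -scaler_sumr sum_bernstein alg_polyC subrr.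
move=> i le_iN; have /eqP := bernstein_free (y := fun i => x i - q`_0) Hxc le_iN.
have /eqP := bernstein_free (y := fun i => x i - q`_0) Hxc (leq0n N).
by rewrite !subr_eq0 => /eqP -> /eqP.
Qed.

Lemma poly_eq0_on_unit_interval (p : {poly R}) :
  (forall a : R, 0 < a < 1 -> p.[a] = 0) -> p = 0.
Proof.
move=> Hp; apply/eqP; apply: contraT => p_neq0.
pose rs := [seq (m.+2%:R : R)^-1 | m <- iota 0 (size p)].
have := max_poly_roots p_neq0 (rs := rs).
have -> : all (root p) rs.
  apply/allP => _ /mapP [m _ ->]; apply/rootP/Hp.
  by rewrite invr_gt0 ltr0Sn invf_lt1 ?ltr0Sn // ltr1n.
have -> : uniq rs.
  rewrite map_inj_uniq ?iota_uniq // => m1 m2 /invr_inj /eqP.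
  by rewrite eqr_nat => /eqP [].
by rewrite size_map size_iota ltnn => /(_ isT isT).
Qed.

(* The coefficient of [bernstein N i] in the degree elevation of [bernstein n j]. *)
Definition elev n N j i : R := ('C(i, j) * 'C(N - i, n - j))%:R / 'C(N, n)%:R.

Lemma elev_ge0 n N j i : 0 <= elev n N j i.
Proof. by rewrite divr_ge0 ?ler0n. Qed.

Lemma elev_gt0 n N j i : (n <= N)%N -> (j <= i)%N -> (n - j <= N - i)%N ->
  0 < elev n N j i.
Proof. by move=> *; rewrite divr_gt0 // ltr0n ?muln_gt0 !bin_gt0 //; apply/andP. Qed.

Lemma elev_eq0 n N j i : ((i < j) || (N - i < n - j))%N -> elev n N j i = 0.
Proof. by rewrite /elev; case/orP => /bin_small->; rewrite ?muln0 ?mul0n mul0r. Qed.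

Lemma natr_bin_neq0 n N : (n <= N)%N -> ('C(N, n)%:R : R) != 0.
Proof. by rewrite pnatr_eq0 -lt0n bin_gt0. Qed.

Lemma elevM_bin n N j i : (j <= n)%N -> (n <= N)%N -> (j <= i)%N -> (i - j <= N - n)%N ->
  elev n N j i * 'C(N, i)%:R = ('C(n, j) * 'C(N - n, i - j))%:R.
Proof.
move=> le_jn le_nN le_ji le_ijNn; rewrite /elev mulrAC -natrM bin_trinomial //.
by rewrite natrM mulfK // natr_bin_neq0.
Qed.

Lemma bernstein_elevate n N j : (n <= N)%N -> (j <= n)%N ->
  bernstein n j = \sum_(i < N.+1) elev n N j i *: bernstein N i.
Proof.
move=> le_nN le_jn; set d := (N - n)%N.
have -> : bernstein n j = \sum_(t < d.+1)
    ('C(n, j) * 'C(d, t))%:R *: ('X^(j + t) * (1 - 'X) ^+ (N - (j + t))).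
  transitivity ('C(n, j)%:R *: ('X^j * (1 - 'X) ^+ (n - j) * ((1 - 'X) + 'X) ^+ d)
    : {poly R}); first by rewrite subrK expr1n mulr1.
  rewrite (exprDn (1 - 'X)) mulr_sumr scaler_sumr; apply: eq_bigr => [[t lt_td]] _ /=.
  rewrite mulrnAr -scaler_nat scalerA -natrM.
  have -> : (N - (j + t) = (n - j) + (d - t))%N by rewrite /d; lia.
  by congr (_ *: _); rewrite !exprD; ring.
rewrite (eq_bigr (fun i : 'I_N.+1 => (elev n N j i * 'C(N, i)%:R) *:
  ('X^i * (1 - 'X) ^+ (N - i)))); last by move=> i _; rewrite scalerA.
rewrite -(big_mkord predT (fun i => (elev n N j i * 'C(N, i)%:R) *:
  ('X^i * (1 - 'X) ^+ (N - i)))).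
symmetry; rewrite (@big_cat_nat _ _ _ j) //=; last by lia.
rewrite [X in X + _]big_nat_cond [X in X + _]big1 ?add0r; last first.
  by move=> i /andP [/andP [_ lt_ij] _]; rewrite elev_eq0 ?lt_ij // mul0r scale0r.
rewrite (@big_cat_nat _ _ _ (j + d.+1)) ?leq_addr //=; last by lia.
rewrite [X in _ + X]big_nat_cond [X in _ + X]big1 ?addr0; last first.
  move=> i /andP [/andP [le_i lt_iN] _]; rewrite elev_eq0 ?mul0r ?scale0r //.
  by apply/orP; right; rewrite /d in le_i; lia.
rewrite -{1}(add0n j) big_addn addnC addnK big_mkord.
apply: eq_bigr => [[t lt_td]] _ /=.
by rewrite elevM_bin ?addnK 1?addnC //; lia.
Qed.

Lemma dbernstein_elevate n N j : (n <= N)%N -> (j <= n)%N ->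
  dbernstein n j = \sum_(i < N.+1) elev n N j i *: dbernstein N i.
Proof.
move=> le_nN le_jn; rewrite /dbernstein (bernstein_elevate le_nN le_jn) linear_sum.
by apply: eq_bigr => i _; rewrite linearZ.
Qed.

Definition bernstein_lead N i : R := (bernstein N i)`_N.

Lemma sum_elev_lead n N j : (n < N)%N -> (j <= n)%N ->
  \sum_(i < N.+1) elev n N j i * bernstein_lead N i = 0.
Proof.
move=> lt_nN le_jn.
have := congr1 (fun p : {poly R} => p`_N) (bernstein_elevate (ltnW lt_nN) le_jn).
rewrite /= coef_bernstein_gt // coef_sum => Hlead; rewrite [RHS]Hlead.
by apply: eq_bigr => i _; rewrite coefZ.
Qed.

Lemma sum_bernstein_lead N : (0 < N)%N -> \sum_(i < N.+1) bernstein_lead N i = 0.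
Proof.
move=> N_gt0; have := congr1 (fun p : {poly R} => p`_N) (sum_bernstein N).
by rewrite /= coef_sum coef1 eqn0Ngt N_gt0.
Qed.

Lemma bernstein_lead_id N : bernstein_lead N N = 1.
Proof. by rewrite /bernstein_lead coefZ coefXnM ltnn !subnn expr0 coef1 binn mulr1. Qed.

Lemma sum_elev_row n N j : (j <= n)%N ->
  \sum_(l < N.+1) elev n N j l = 'C(N.+1, n.+1)%:R / 'C(N, n)%:R.
Proof.
by move=> le_jn; rewrite -mulr_suml -natr_sum Vandermonde_upper subnKC.
Qed.

Lemma sum_elev_col n N i : (n <= N)%N -> (i <= N)%N ->
  \sum_(j < n.+1) elev n N j i = 1.
Proof.
move=> le_nN le_iN; rewrite -mulr_suml -natr_sum binomial.Vandermonde subnKC //.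
by rewrite divff // natr_bin_neq0.
Qed.

Lemma elev_col0 n N j : (n <= N)%N -> elev n N j 0 = (j == 0)%:R.
Proof.
move=> le_nN; rewrite /elev subn0; case: j => [|j] /=.
  by rewrite bin0 subn0 mul1n divff // natr_bin_neq0.
by rewrite bin0n mul0n mul0r.
Qed.

Lemma elev_colN n N j : (n <= N)%N -> (j <= n)%N -> elev n N j N = (j == n)%:R.
Proof.
move=> le_nN le_jn; rewrite /elev subnn; have [->|neq_jn] := eqVneq j n.
  by rewrite subnn bin0 muln1 divff // natr_bin_neq0.
by rewrite bin0n subn_eq0 leqNgt ltn_neqAle neq_jn le_jn muln0 mul0r.
Qed.

Lemma elev_row_zero3 n N j : (3 <= n)%N -> (n < N)%N -> (j <= n)%N ->
  exists t : seq nat, [/\ size t = 3, uniq t &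
    {in t, forall l, (l <= N)%N /\ elev n N j l = 0}].
Proof.
move=> le3n lt_nN le_jn.
have [t [t3 uniq_t t_zero]] : exists t : seq nat, [/\ size t = 3, uniq t &
    {in t, forall l, (l <= N)%N && ((l < j) || (N - l < n - j))%N}].
  case: j le_jn => [|[|[|j]]] le_jn;
    [exists [:: N; N.-1; N.-2] | exists [:: 0; N; N.-1]%N
    | exists [:: 0; 1; N]%N | exists [:: 0; 1; 2]%N];
  by split; [|rewrite /= ?inE; lia|move=> l; rewrite !inE => /or3P [] /eqP ->; lia].
by exists t; split=> // l /t_zero /andP [le_lN /elev_eq0].
Qed.

Lemma elev_inj n N v l1 l2 : (0 < n)%N -> (n <= N)%N -> (v == 0%N) || (v == n) ->
  (l1 <= N)%N -> (l2 <= N)%N ->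
  elev n N v l1 != 0 -> elev n N v l1 = elev n N v l2 -> l1 = l2.
Proof.
move=> n_gt0 le_nN v0n le_l1N le_l2N; rewrite /elev => elev_neq0.
move/(mulIf (invr_neq0 (natr_bin_neq0 le_nN)))/eqP; rewrite eqr_nat => /eqP eq_bin.
have bin_gt0 : (0 < 'C(l1, v) * 'C(N - l1, n - v))%N.
  by rewrite lt0n; move: elev_neq0; apply: contra_neq => ->; rewrite mul0r.
case/orP: v0n eq_bin bin_gt0 => /eqP ->; rewrite ?subn0 ?subnn ?bin0 ?mul1n ?muln1.
  by move=> eq_bin bin_gt0; have := bin_inj n_gt0 bin_gt0 eq_bin; lia.
by move=> eq_bin bin_gt0; apply: bin_inj n_gt0 bin_gt0 eq_bin.
Qed.

(** * Bilinear forms in the derivatives of the Bernstein basis *)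

Definition vanishes_on_square (f : R -> R -> R) :=
  forall a b, 0 < a < 1 -> 0 < b < 1 -> f a b = 0.

Definition bform n (Y : nat -> nat -> R) (a b : R) : R :=
  \sum_(i < n.+1) \sum_(l < n.+1) Y i l * ((dbernstein n i).[a] * (dbernstein n l).[b]).

Lemma bformD n (Y Z : nat -> nat -> R) a b :
  bform n (fun i l => Y i l + Z i l) a b = bform n Y a b + bform n Z a b.
Proof.
rewrite /bform -big_split; apply: eq_bigr => i _.
by rewrite -big_split; apply: eq_bigr => l _; rewrite mulrDl.
Qed.

Lemma bformZ n c (Y : nat -> nat -> R) a b :
  bform n (fun i l => c * Y i l) a b = c * bform n Y a b.
Proof.
rewrite /bform mulr_sumr; apply: eq_bigr => i _.
by rewrite mulr_sumr; apply: eq_bigr => l _; rewrite mulrA.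
Qed.

Lemma bform0 n a b : bform n (fun _ _ => 0) a b = 0.
Proof. by rewrite /bform big1 // => i _; rewrite big1 // => l _; rewrite mul0r. Qed.

Definition elev_mx n N (Y : nat -> nat -> R) i l : R :=
  \sum_(j < n.+1) \sum_(m < n.+1) elev n N j i * Y j m * elev n N m l.

Lemma bform_elev n N Y a b : (n <= N)%N -> bform n Y a b = bform N (elev_mx n N Y) a b.
Proof.
move=> le_nN; rewrite /bform /elev_mx.
have horner_elev j x : (j < n.+1)%N ->
    (dbernstein n j).[x] = \sum_(i < N.+1) elev n N j i * (dbernstein N i).[x].
  move=> lt_jn; rewrite (dbernstein_elevate le_nN lt_jn) horner_sum.
  by apply: eq_bigr => i _; rewrite hornerZ.
transitivity (\sum_(j < n.+1) \sum_(m < n.+1) \sum_(i < N.+1) \sum_(l < N.+1)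
    elev n N j i * Y j m * elev n N m l * ((dbernstein N i).[a] * (dbernstein N l).[b])).
  apply: eq_bigr => j _; apply: eq_bigr => m _.
  rewrite !horner_elev // mulr_suml mulr_sumr; apply: eq_bigr => i _.
  by rewrite !mulr_sumr; apply: eq_bigr => l _; ring.
symmetry.
under eq_bigr => i _ do under eq_bigr => l _ do rewrite mulr_suml.
under eq_bigr => i _ do under eq_bigr => l _ do under eq_bigr => j _ do rewrite mulr_suml.
under eq_bigr => i _ do rewrite exchange_big /=.
rewrite exchange_big /=.
under eq_bigr => j _ do under eq_bigr => i _ do rewrite exchange_big /=.
by under eq_bigr => j _ do rewrite exchange_big /=.
Qed.

(* [Y i l = f i + g l] for some [f] and [g], on the square [0..N] x [0..N]. *)
Definition additive_mx N (Y : nat -> nat -> R) :=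
  forall i l, (i <= N)%N -> (l <= N)%N -> Y i l + Y 0%N 0%N = Y i 0%N + Y 0%N l.

Lemma additive_bform N Y : vanishes_on_square (bform N Y) -> additive_mx N Y.
Proof.
move=> HY.
pose rowY b i := \sum_(l < N.+1) Y i l * (dbernstein N l).[b].
have rowY_const b : 0 < b < 1 -> forall i, (i <= N)%N -> rowY b i = rowY b 0%N.
  move=> b01; apply: dbernstein_kernel; apply: poly_eq0_on_unit_interval => a a01.
  rewrite -(HY a b a01 b01) horner_sum; apply: eq_bigr => i _.
  by rewrite hornerZ mulr_suml; apply: eq_bigr => l _; ring.
move=> i l le_iN le_lN.
suff /(_ l le_lN) /eqP : forall l, (l <= N)%N -> Y i l - Y 0%N l = Y i 0%N - Y 0%N 0%N.
  by rewrite subr_eq addrAC eq_sym subr_eq eq_sym => /eqP.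
apply: (dbernstein_kernel (x := fun l => Y i l - Y 0%N l)).
apply: poly_eq0_on_unit_interval => b b01; rewrite horner_sum.
under eq_bigr do rewrite hornerZ mulrBl.
by rewrite sumrB -/(rowY b i) -/(rowY b 0%N) rowY_const ?subrr.
Qed.

Lemma additive_mx_tr N Y : additive_mx N Y -> additive_mx N (fun i l => Y l i).
Proof. by move=> HY i l le_iN le_lN; rewrite HY // addrC. Qed.

Lemma additive_mx_sumr N Y (w : nat -> R) i : additive_mx N Y -> (i <= N)%N ->
  \sum_(l < N.+1) Y i l * w l =
  \sum_(l < N.+1) Y 0%N l * w l + (Y i 0%N - Y 0%N 0%N) * \sum_(l < N.+1) w l.
Proof.
move=> HY le_iN; rewrite mulr_sumr -big_split; apply: eq_bigr => l _ /=.
have := HY i l le_iN (ltn_ord l) => Yil.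
have -> : Y i l = Y i 0%N + Y 0%N l - Y 0%N 0%N by rewrite -Yil addrK.
ring.
Qed.

Lemma additive_mx_col0 N Y r : additive_mx N Y ->
  (forall i, (i <= N)%N -> \sum_(l < N.+1) Y i l = r) ->
  forall i, (i <= N)%N -> Y i 0%N = Y 0%N 0%N.
Proof.
move=> HY rowY i le_iN; have := additive_mx_sumr (fun=> 1) HY le_iN.
under eq_bigr do rewrite mulr1; under [X in _ = X + _]eq_bigr do rewrite mulr1.
rewrite !rowY // sumr_const card_ord => /eqP; rewrite addrC -subr_eq subrr eq_sym.
by rewrite mulr_natr mulrn_eq0 /= subr_eq0 => /eqP.
Qed.

Lemma additive_mx_const N Y r r' : additive_mx N Y ->
  (forall i, (i <= N)%N -> \sum_(l < N.+1) Y i l = r) ->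
  (forall l, (l <= N)%N -> \sum_(i < N.+1) Y i l = r') ->
  forall i l, (i <= N)%N -> (l <= N)%N -> Y i l = Y 0%N 0%N.
Proof.
move=> HY rowY colY i l le_iN le_lN.
have col0 := additive_mx_col0 HY rowY.
have row0 := additive_mx_col0 (additive_mx_tr HY) colY.
by apply: (addIr (Y 0%N 0%N)); rewrite HY // col0 // row0.
Qed.

(** * Permutation matrices *)

Lemma sum_delta n (F : nat -> R) k : (k <= n)%N ->
  \sum_(m < n.+1) ((m : nat) == k)%:R * F m = F k.
Proof.
move=> le_kn; rewrite (bigD1 (Ordinal (le_kn : (k < n.+1)%N))) //= eqxx mul1r.
rewrite big1 ?addr0 // => m ne_mk; suff /negbTE -> : (nat_of_ord m != k) by rewrite mul0r.
by apply: contra ne_mk => /eqP eq_mk; apply/eqP/val_inj.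
Qed.

Definition nperm n (p : 'S_n.+1) j : nat := p (inord j).

Definition pmx n (p : 'S_n.+1) j l : R := (nperm p j == l)%:R.

Lemma nperm_le n (p : 'S_n.+1) j : (nperm p j <= n)%N.
Proof. by rewrite -ltnS ltn_ord. Qed.

Lemma nperm_inj n (p : 'S_n.+1) j j' : (j <= n)%N -> (j' <= n)%N ->
  nperm p j = nperm p j' -> j = j'.
Proof.
move=> le_jn le_j'n /val_inj /perm_inj /(congr1 val).
by rewrite /= !inordK // ltnS.
Qed.

Lemma nperm_surj n (p : 'S_n.+1) l : (l <= n)%N -> exists2 j, (j <= n)%N & nperm p j = l.
Proof.
move=> le_ln; exists ((p^-1)%g (inord l) : nat); first by rewrite -ltnS ltn_ord.
by rewrite /nperm inord_val permKV inordK // ltnS.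
Qed.

Lemma nperm_neq n (p q : 'S_n.+1) : p <> q ->
  exists2 j, (j <= n)%N & nperm p j != nperm q j.
Proof.
move=> neq_pq; have /existsP [x] : [exists x, p x != q x].
  by apply: contra_notT neq_pq => /existsPn eq_pq; apply/permP => x; apply/eqP/negPn.
by exists x; rewrite ?/nperm ?inord_val // -ltnS ltn_ord.
Qed.

Lemma pmx_id n (p : 'S_n.+1) i : pmx p i (nperm p i) = 1.
Proof. by rewrite /pmx eqxx. Qed.

Lemma pmx_eq0 n (p : 'S_n.+1) i l : nperm p i != l -> pmx p i l = 0.
Proof. by rewrite /pmx => /negbTE ->. Qed.

Lemma sum_pmx n (p : 'S_n.+1) i (F : nat -> R) :
  \sum_(l < n.+1) pmx p i l * F l = F (nperm p i).
Proof.
by rewrite -(sum_delta F (nperm_le p i)); apply: eq_bigr => l _; rewrite /pmx eq_sym.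
Qed.

Lemma sum_pmx_row n (p : 'S_n.+1) i : \sum_(l < n.+1) pmx p i l = 1.
Proof. by rewrite -(sum_pmx p i (fun=> 1)); apply: eq_bigr => l _; rewrite mulr1. Qed.

Lemma sum_pmx_col n (p : 'S_n.+1) l : (l <= n)%N -> \sum_(i < n.+1) pmx p i l = 1.
Proof.
case/(nperm_surj p) => j le_jn <-; rewrite -(sum_delta (fun=> 1) le_jn).
apply: eq_bigr => i _; rewrite mulr1 /pmx; congr (nat_of_bool _)%:R.
apply/idP/idP => [/eqP/nperm_inj -> //|/eqP -> //]; by rewrite -ltnS.
Qed.

Lemma pmx2_eq0 n (p q : 'S_n.+1) c1 c2 : p <> q ->
  (forall i l, (i <= n)%N -> (l <= n)%N -> c1 * pmx p i l + c2 * pmx q i l = 0) ->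
  c1 = 0 /\ c2 = 0.
Proof.
move=> /nperm_neq [j le_jn neq_pq] Hc.
have := Hc j (nperm p j) le_jn (nperm_le p j).
have := Hc j (nperm q j) le_jn (nperm_le q j).
rewrite !pmx_id !pmx_eq0 // 1?eq_sym // !mulr0 !mulr1 add0r addr0.
by move=> -> ->.
Qed.

Lemma pmx3_eq0 n (p q r : 'S_n.+1) c1 c2 c3 : p <> q -> p <> r -> q <> r ->
  (forall i l, (i <= n)%N -> (l <= n)%N ->
     c1 * pmx p i l + c2 * pmx q i l + c3 * pmx r i l = 0) ->
  [/\ c1 = 0, c2 = 0 & c3 = 0].
Proof.
move=> neq_pq neq_pr neq_qr Hc; have [j le_jn neq_pqj] := nperm_neq neq_pq.
have Hcj l (le_ln : (l <= n)%N) := Hc j l le_jn le_ln; rewrite /pmx in Hcj.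
have neq_qpj : nperm q j != nperm p j by rewrite eq_sym.
have [eq_rp|neq_rp] := eqVneq (nperm r j) (nperm p j).
  have c2_0 : c2 = 0.
    move: (Hcj _ (nperm_le q j)).
    by rewrite eq_rp eqxx (negbTE neq_pqj) !mulr0 add0r addr0 mulr1.
  suff [] : c1 = 0 /\ c3 = 0 by split.
  apply: (pmx2_eq0 neq_pr) => i l le_in le_ln.
  by move: (Hc i l le_in le_ln); rewrite c2_0 mul0r addr0.
have [eq_rq|neq_rq] := eqVneq (nperm r j) (nperm q j).
  have c1_0 : c1 = 0.
    move: (Hcj _ (nperm_le p j)).
    by rewrite eq_rq eqxx (negbTE neq_qpj) !mulr0 !addr0 mulr1.
  suff [] : c2 = 0 /\ c3 = 0 by split.
  apply: (pmx2_eq0 neq_qr) => i l le_in le_ln.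
  by move: (Hc i l le_in le_ln); rewrite c1_0 mul0r add0r.
have c3_0 : c3 = 0.
  move: (Hcj _ (nperm_le r j)).
  by rewrite eqxx ![_ == nperm r j]eq_sym (negbTE neq_rp) (negbTE neq_rq) !mulr0 !add0r mulr1.
suff [] : c1 = 0 /\ c2 = 0 by split.
apply: (pmx2_eq0 neq_pq) => i l le_in le_ln.
by move: (Hc i l le_in le_ln); rewrite c3_0 mul0r addr0.
Qed.

Lemma additive_mx_eq0 N Y r l0 : additive_mx N Y ->
  (forall i, (i <= N)%N -> \sum_(l < N.+1) Y i l = r) ->
  (forall l, (l <= N)%N -> \sum_(i < N.+1) Y i l = r) ->
  (l0 <= N)%N -> Y 0%N l0 = 0 ->
  forall i l, (i <= N)%N -> (l <= N)%N -> Y i l = 0.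
Proof.
move=> HY rowY colY le_l0N Y0l0 i l le_iN le_lN.
have Yconst := additive_mx_const HY rowY colY.
by rewrite Yconst // -(Yconst 0%N l0).
Qed.

Lemma additive_pmx2 N (p q : 'S_N.+1) c1 c2 : (2 <= N)%N -> p <> q ->
  additive_mx N (fun i l => c1 * pmx p i l + c2 * pmx q i l) -> c1 = 0 /\ c2 = 0.
Proof.
move=> le2N neq_pq HY; apply: (pmx2_eq0 neq_pq).
have [l0] := exists_notin (s := [:: nperm p 0; nperm q 0]) (iota_uniq 0 3) isT.
rewrite mem_iota !inE negb_or => lt_l03 /andP [neq_l0p neq_l0q].
apply: (additive_mx_eq0 (r := c1 + c2) HY _ _ (l0 := l0)).
- by move=> i _; rewrite big_split /= -!mulr_sumr !sum_pmx_row !mulr1.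
- by move=> l le_lN; rewrite big_split /= -!mulr_sumr !sum_pmx_col ?mulr1.
- by lia.
- by rewrite !pmx_eq0 1?eq_sym ?mulr0 ?addr0.
Qed.

Lemma additive_pmx3 N (p q r : 'S_N.+1) c1 c2 c3 : (3 <= N)%N ->
  p <> q -> p <> r -> q <> r ->
  additive_mx N (fun i l => c1 * pmx p i l + c2 * pmx q i l + c3 * pmx r i l) ->
  [/\ c1 = 0, c2 = 0 & c3 = 0].
Proof.
move=> le3N neq_pq neq_pr neq_qr HY; apply: (pmx3_eq0 neq_pq neq_pr neq_qr).
have [l0] := exists_notin (s := [:: nperm p 0; nperm q 0; nperm r 0]) (iota_uniq 0 4) isT.
rewrite mem_iota !inE !negb_or => lt_l04 /and3P [neq_l0p neq_l0q neq_l0r].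
apply: (additive_mx_eq0 (r := c1 + c2 + c3) HY _ _ (l0 := l0)).
- by move=> i _; rewrite !big_split /= -!mulr_sumr !sum_pmx_row !mulr1.
- by move=> l le_lN; rewrite !big_split /= -!mulr_sumr !sum_pmx_col ?mulr1.
- by lia.
- by rewrite !pmx_eq0 1?eq_sym ?mulr0 ?addr0.
Qed.

(* The leading coefficients [bernstein_lead N l] sum to zero without being all equal. *)
Lemma additive_pmx_lead N (p : 'S_N.+1) c Z : (0 < N)%N ->
  additive_mx N (fun i l => c * pmx p i l + Z i l) ->
  (forall i, (i <= N)%N -> \sum_(l < N.+1) Z i l * bernstein_lead N l = 0) -> c = 0.
Proof.
move=> N_gt0 HY HZ.
have lead_row i : (i <= N)%N -> \sum_(l < N.+1) (c * pmx p i l + Z i l) * bernstein_lead N l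
    = c * bernstein_lead N (nperm p i).
  move=> le_iN; under eq_bigr do rewrite mulrDl -mulrA.
  by rewrite big_split /= HZ // addr0 -mulr_sumr sum_pmx.
have lead_const i : (i <= N)%N ->
    c * bernstein_lead N (nperm p i) = c * bernstein_lead N (nperm p 0).
  move=> le_iN; rewrite -!lead_row //.
  by rewrite (additive_mx_sumr _ HY le_iN) sum_bernstein_lead // mulr0 addr0.
apply/eqP; apply: contraT => c_neq0.
have lead_eq l : (l <= N)%N -> bernstein_lead N l = bernstein_lead N (nperm p 0).
  by case/(nperm_surj p) => j le_jN <-; apply: (mulfI c_neq0); apply: lead_const.
have := sum_bernstein_lead N_gt0.
rewrite (eq_bigr (fun=> bernstein_lead N (nperm p 0))) => [|l _]; last first.
  by apply: lead_eq; rewrite -ltnS.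
rewrite sumr_const card_ord -(lead_eq N) // bernstein_lead_id => /eqP.
by rewrite pnatr_eq0.
Qed.

Lemma sum_elev_mx_lead n N Y i : (n < N)%N ->
  \sum_(l < N.+1) elev_mx n N Y i l * bernstein_lead N l = 0.
Proof.
move=> lt_nN; under eq_bigr do rewrite mulr_suml.
rewrite exchange_big /=; apply: big1 => j _.
under eq_bigr do rewrite mulr_suml.
rewrite exchange_big /=; apply: big1 => m _.
under eq_bigr do rewrite -mulrA.
by rewrite -mulr_sumr sum_elev_lead ?mulr0 // -ltnS.
Qed.

Lemma elev_mx_pmx n N (r : 'S_n.+1) i l :
  elev_mx n N (pmx r) i l = \sum_(j < n.+1) elev n N j i * elev n N (nperm r j) l.
Proof.
apply: eq_bigr => j _; rewrite -(sum_pmx r j (fun m => elev n N j i * elev n N m l)).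
by apply: eq_bigr => m _; rewrite mulrAC mulrC.
Qed.

Lemma sum_elev_mx_pmx_row n N (r : 'S_n.+1) i : (n <= N)%N -> (i <= N)%N ->
  \sum_(l < N.+1) elev_mx n N (pmx r) i l = 'C(N.+1, n.+1)%:R / 'C(N, n)%:R.
Proof.
move=> le_nN le_iN; under eq_bigr do rewrite elev_mx_pmx.
rewrite exchange_big /=.
under eq_bigr do rewrite -mulr_sumr sum_elev_row ?nperm_le //.
by rewrite -mulr_suml sum_elev_col // mul1r.
Qed.

Lemma sum_elev_mx_pmx_col n N (r : 'S_n.+1) l : (n <= N)%N -> (l <= N)%N ->
  \sum_(i < N.+1) elev_mx n N (pmx r) i l = 'C(N.+1, n.+1)%:R / 'C(N, n)%:R.
Proof.
move=> le_nN le_lN; under eq_bigr do rewrite elev_mx_pmx.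
rewrite exchange_big /=.
under eq_bigr do rewrite -mulr_suml sum_elev_row ?leq_ord //.
rewrite -mulr_sumr (eq_bigr (fun j : 'I_n.+1 => elev n N (r j) l)); last first.
  by move=> j _; rewrite /nperm inord_val.
have -> : \sum_(j < n.+1) elev n N (r j) l = \sum_(j < n.+1) elev n N j l.
  by rewrite [RHS](reindex_inj (@perm_inj _ r)).
by rewrite sum_elev_col ?mulr1.
Qed.

Lemma elev_mx_pmx_row0 n N (r : 'S_n.+1) l : (n <= N)%N ->
  elev_mx n N (pmx r) 0 l = elev n N (nperm r 0) l.
Proof.
move=> le_nN; rewrite elev_mx_pmx; under eq_bigr do rewrite elev_col0 //.
exact: (sum_delta (fun j => elev n N (nperm r j) l)).
Qed.

Lemma elev_mx_pmx_rowN n N (r : 'S_n.+1) l : (n <= N)%N ->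
  elev_mx n N (pmx r) N l = elev n N (nperm r n) l.
Proof.
move=> le_nN; rewrite elev_mx_pmx.
under eq_bigr => j _ do rewrite (elev_colN le_nN (ltn_ord j : (j <= n)%N)).
exact: (sum_delta (fun j => elev n N (nperm r j) l)).
Qed.

Lemma elev_mx_pmx_row1_gt0 n N (r : 'S_n.+1) j l : (n < N)%N -> (j <= 1)%N ->
  (j <= n)%N -> (nperm r j <= l <= (nperm r j).+1)%N -> 0 < elev_mx n N (pmx r) 1 l.
Proof.
move=> lt_nN le_j1 le_jn /andP [le_rl le_lr].
have elev2_ge0 k : 0 <= elev n N k 1 * elev n N (nperm r k) l.
  by rewrite mulr_ge0 ?elev_ge0.
rewrite elev_mx_pmx lt0r sumr_ge0 ?andbT // psumr_neq0 //.
apply/hasP; exists (Ordinal (le_jn : (j < n.+1)%N)); first by rewrite mem_index_enum.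
by have := nperm_le r j; rewrite /= mulr_gt0 // elev_gt0 //; lia.
Qed.

Lemma elev_mx_pmx_row1_pos3 n N (r : 'S_n.+1) : (0 < n)%N -> (n < N)%N ->
  exists t : seq nat, [/\ size t = 3, uniq t &
    {in t, forall l, (l <= N)%N /\ 0 < elev_mx n N (pmx r) 1 l}].
Proof.
move=> n_gt0 lt_nN.
have neq_r01 : nperm r 0 != nperm r 1.
  by apply/eqP => /(nperm_inj (leq0n n) n_gt0).
have pos j l : (j <= 1)%N -> (nperm r j <= l <= (nperm r j).+1)%N ->
    (l <= N)%N /\ 0 < elev_mx n N (pmx r) 1 l.
  move=> le_j1 le_rl; have := nperm_le r j; split; first by lia.
  by apply: (elev_mx_pmx_row1_gt0 (j := j)) => //; lia.
have cols j j' : (j <= 1)%N -> (j' <= 1)%N -> (nperm r j < nperm r j')%N ->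
    exists t : seq nat, [/\ size t = 3, uniq t &
      {in t, forall l, (l <= N)%N /\ 0 < elev_mx n N (pmx r) 1 l}].
  move=> le_j1 le_j'1 lt_rjj'; exists [:: nperm r j; (nperm r j).+1; (nperm r j').+1].
  split=> //=; first by rewrite !inE; lia.
  move=> l; rewrite !inE => /or3P [] /eqP ->;
    [apply: (pos j) | apply: (pos j) | apply: (pos j')]; lia.
case: (ltngtP (nperm r 0) (nperm r 1)) => [||/eqP]; [exact: cols | exact: cols |].
by rewrite (negbTE neq_r01).
Qed.

Lemma elev_mx_pmx_row_end n N (r : 'S_n.+1) : (n <= 2)%N -> (n <= N)%N ->
  exists i0 v, [/\ (i0 <= N)%N, (v == 0%N) || (v == n) &
    forall l, elev_mx n N (pmx r) i0 l = elev n N v l].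
Proof.
move=> le_n2 le_nN.
have [r0_end|r0_mid] := boolP ((nperm r 0 == 0%N) || (nperm r 0 == n)).
  by exists 0%N, (nperm r 0); split=> // l; apply: elev_mx_pmx_row0.
exists N, (nperm r n); split=> // [|l]; last exact: elev_mx_pmx_rowN.
have : nperm r 0 != nperm r n.
  by apply/eqP => /(nperm_inj (leq0n n) (leqnn n)) n0; move: r0_mid (nperm_le r 0); lia.
by have := nperm_le r 0; have := nperm_le r n; move: r0_mid; lia.
Qed.

Lemma additive_pmx2_elev_off N n (p q : 'S_N.+1) (r : 'S_n.+1) c1 c2 c3 :
  (n < N)%N -> c3 != 0 ->
  additive_mx N (fun i l =>
    c1 * pmx p i l + c2 * pmx q i l + c3 * elev_mx n N (pmx r) i l) ->
  exists mu, forall i l, (i <= N)%N -> (l <= N)%N ->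
    l \notin [:: nperm p i; nperm q i] -> elev_mx n N (pmx r) i l = mu.
Proof.
move=> lt_nN c3_neq0 HY; have le_nN := ltnW lt_nN.
set E := elev_mx n N (pmx r) in HY *.
set s := 'C(N.+1, n.+1)%:R / 'C(N, n)%:R : R.
have Yconst := additive_mx_const (r := c1 + c2 + c3 * s) (r' := c1 + c2 + c3 * s) HY.
have {}Yconst i l : (i <= N)%N -> (l <= N)%N ->
    c1 * pmx p i l + c2 * pmx q i l + c3 * E i l =
    c1 * pmx p 0 0 + c2 * pmx q 0 0 + c3 * E 0%N 0%N.
  apply: Yconst => [i' le_i'N|l' le_l'N]; rewrite !big_split /= -!mulr_sumr.
    by rewrite !sum_pmx_row sum_elev_mx_pmx_row // !mulr1.
  by rewrite !sum_pmx_col // sum_elev_mx_pmx_col // !mulr1.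
exists ((c1 * pmx p 0 0 + c2 * pmx q 0 0 + c3 * E 0%N 0%N) / c3).
move=> i l le_iN le_lN; rewrite !inE negb_or => /andP [neq_lp neq_lq].
apply: (mulfI c3_neq0); rewrite [RHS]mulrC divfK // -(Yconst i l) //.
by rewrite !pmx_eq0 1?eq_sym // !mulr0 !add0r.
Qed.

(* Rows [1], [0] and [N] of the elevated matrix are explicit enough to contradict its
   constancy outside the two permutation entries of each row. *)
Lemma additive_pmx2_elev N n (p q : 'S_N.+1) (r : 'S_n.+1) c1 c2 c3 :
  (3 <= N)%N -> (0 < n)%N -> (n < N)%N -> c3 != 0 ->
  ~ additive_mx N (fun i l =>
      c1 * pmx p i l + c2 * pmx q i l + c3 * elev_mx n N (pmx r) i l).
Proof.
move=> le3N n_gt0 lt_nN c3_neq0 /(additive_pmx2_elev_off lt_nN c3_neq0) [mu Emu].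
set E := elev_mx n N (pmx r) in Emu.
have avoid i t : size t = 3 -> uniq t ->
    exists2 l, l \in t & l \notin [:: nperm p i; nperm q i].
  by move=> t3 uniq_t; apply: exists_notin; rewrite ?t3.
have [mu0|mu_neq0] := eqVneq mu 0.
  have [t [t3 uniq_t t_pos]] := elev_mx_pmx_row1_pos3 r n_gt0 lt_nN.
  have [l /t_pos [le_lN E_gt0] l_notin] := avoid 1%N t t3 uniq_t.
  have le1N : (1 <= N)%N by lia.
  by move: E_gt0; rewrite -/E Emu // mu0 ltxx.
have [le3n|lt_n3] := leqP 3 n.
  have [t [t3 uniq_t t_zero]] := elev_row_zero3 le3n lt_nN (nperm_le r 0).
  have [l /t_zero [le_lN E0] l_notin] := avoid 0%N t t3 uniq_t.
  by move: mu_neq0; rewrite -(Emu 0%N l) // /E elev_mx_pmx_row0 ?E0 ?eqxx // ltnW.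
have [i0 [v [le_i0N v0n rowE]]] := elev_mx_pmx_row_end r lt_n3 (ltnW lt_nN).
have [l1] := exists_notin (s := [:: nperm p i0; nperm q i0]) (iota_uniq 0 4) isT.
rewrite mem_iota => lt_l14 l1_notin.
have [l2] := exists_notin (s := [:: l1; nperm p i0; nperm q i0]) (iota_uniq 0 4) isT.
rewrite mem_iota inE negb_or => lt_l24 /andP [neq_l21 l2_notin].
have El1 : elev n N v l1 = mu by rewrite -rowE; apply: Emu => //; lia.
have El2 : elev n N v l2 = mu by rewrite -rowE; apply: Emu => //; lia.
suff : l2 = l1 by move/eqP: neq_l21.
by apply: (elev_inj n_gt0 (ltnW lt_nN) v0n); rewrite ?El1 ?El2 //; lia.
Qed.

(** * Linear dependences among the forms of permutations *)

Lemma bform_pmx_indep n (p : 'S_n.+1) d : (0 < n)%N ->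
  vanishes_on_square (fun a b => d * bform n (pmx p) a b) -> d = 0.
Proof.
move=> n_gt0 Hd; apply: (additive_pmx_lead (p := p) (Z := fun _ _ => 0) n_gt0).
  by apply: additive_bform => a b a01 b01; rewrite bformD bformZ bform0 addr0 Hd.
by move=> i _; rewrite big1 // => l _; rewrite mul0r.
Qed.

Lemma bform_pmx2_dep n2 n3 (p2 : 'S_n2.+1) (p3 : 'S_n3.+1) d2 d3 :
  existT _ n2.+1 p2 <> existT _ n3.+1 p3 :> anyperm ->
  (0 < n3)%N -> (n3 <= n2)%N -> d2 != 0 \/ d3 != 0 ->
  vanishes_on_square (fun a b => d2 * bform n2 (pmx p2) a b + d3 * bform n3 (pmx p3) a b) ->
  n2 = 1%N /\ n3 = 1%N.
Proof.
move=> neq23 n3_gt0 le32 d_neq0 Hd.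
have [lt32|eq32] : (n3 < n2)%N \/ n3 = n2 by lia.
  have d2_0 : d2 = 0.
    apply: (additive_pmx_lead (p := p2) (Z := fun i l => d3 * elev_mx n3 n2 (pmx p3) i l)).
    - by lia.
    - apply: additive_bform => a b a01 b01.
      by rewrite bformD !bformZ -bform_elev ?Hd // ltnW.
    - move=> i _; under eq_bigr do rewrite -mulrA.
      by rewrite -mulr_sumr sum_elev_mx_lead ?mulr0.
  have d3_0 : d3 = 0.
    apply: (bform_pmx_indep n3_gt0) => a b a01 b01.
    by rewrite -(Hd a b a01 b01) d2_0 mul0r add0r.
  by rewrite d2_0 d3_0 eqxx in d_neq0; case: d_neq0.
subst n3; have neq_p23 : p2 <> p3 by move=> eq_p23; apply: neq23; rewrite eq_p23.
have [le_n2_1|lt1n2] := leqP n2 1; first by split; lia.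
have [d2_0 d3_0] : d2 = 0 /\ d3 = 0.
  apply: (additive_pmx2 lt1n2 neq_p23); apply: additive_bform => a b a01 b01.
  by rewrite bformD !bformZ Hd.
by rewrite d2_0 d3_0 eqxx in d_neq0; case: d_neq0.
Qed.

Lemma bform_pmx3_dep_top n1 n3 (p1 p2 : 'S_n1.+1) (p3 : 'S_n3.+1) d1 d2 d3 :
  p1 <> p2 ->
  existT _ n1.+1 p1 <> existT _ n3.+1 p3 :> anyperm ->
  existT _ n1.+1 p2 <> existT _ n3.+1 p3 :> anyperm ->
  (3 <= n1)%N -> (0 < n3)%N -> (n3 <= n1)%N ->
  [\/ d1 != 0, d2 != 0 | d3 != 0] ->
  ~ vanishes_on_square (fun a b => d1 * bform n1 (pmx p1) a b + d2 * bform n1 (pmx p2) a b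
                                   + d3 * bform n3 (pmx p3) a b).
Proof.
move=> neq_p12 neq13 neq23 le3n1 n3_gt0 le31 d_neq0 Hd.
have [lt31|eq31] : (n3 < n1)%N \/ n3 = n1 by lia.
  have HY : additive_mx n1 (fun i l =>
      d1 * pmx p1 i l + d2 * pmx p2 i l + d3 * elev_mx n3 n1 (pmx p3) i l).
    apply: additive_bform => a b a01 b01.
    by rewrite !bformD !bformZ -bform_elev ?Hd // ltnW.
  have [d3_0|d3_neq0] := eqVneq d3 0; last first.
    exact: (additive_pmx2_elev le3n1 n3_gt0 lt31 d3_neq0 HY).
  have [d1_0 d2_0] : d1 = 0 /\ d2 = 0.
    apply: (additive_pmx2 _ neq_p12); first by lia.
    apply: additive_bform => a b a01 b01.
    by rewrite bformD !bformZ -(Hd a b a01 b01) d3_0 mul0r addr0.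
  by rewrite d1_0 d2_0 d3_0 eqxx in d_neq0; case: d_neq0.
subst n3; have neq_p13 : p1 <> p3 by move=> eq_p13; apply: neq13; rewrite eq_p13.
have neq_p23 : p2 <> p3 by move=> eq_p23; apply: neq23; rewrite eq_p23.
have [d1_0 d2_0 d3_0] : [/\ d1 = 0, d2 = 0 & d3 = 0].
  apply: (additive_pmx3 le3n1 neq_p12 neq_p13 neq_p23); apply: additive_bform => a b a01 b01.
  by rewrite !bformD !bformZ Hd.
by rewrite d1_0 d2_0 d3_0 eqxx in d_neq0; case: d_neq0.
Qed.

Lemma bform_pmx3_dep n1 n2 n3 (p1 : 'S_n1.+1) (p2 : 'S_n2.+1) (p3 : 'S_n3.+1) d1 d2 d3 :
  existT _ n1.+1 p1 <> existT _ n2.+1 p2 :> anyperm ->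
  existT _ n1.+1 p1 <> existT _ n3.+1 p3 :> anyperm ->
  existT _ n2.+1 p2 <> existT _ n3.+1 p3 :> anyperm ->
  (3 <= n1)%N -> (0 < n3)%N -> (n3 <= n2)%N -> (n2 <= n1)%N ->
  [\/ d1 != 0, d2 != 0 | d3 != 0] ->
  vanishes_on_square (fun a b => d1 * bform n1 (pmx p1) a b + d2 * bform n2 (pmx p2) a b
                                 + d3 * bform n3 (pmx p3) a b) ->
  n2 = 1%N /\ n3 = 1%N.
Proof.
move=> neq12 neq13 neq23 le3n1 n3_gt0 le32 le21 d_neq0 Hd.
have [eq21|lt21] : n2 = n1 \/ (n2 < n1)%N by lia.
  subst n2; have neq_p12 : p1 <> p2 by move=> eq_p12; apply: neq12; rewrite eq_p12.
  by case: (bform_pmx3_dep_top neq_p12 neq13 neq23 le3n1 n3_gt0 le32 d_neq0 Hd).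
have d1_0 : d1 = 0.
  apply: (additive_pmx_lead (p := p1) (Z := fun i l =>
    d2 * elev_mx n2 n1 (pmx p2) i l + d3 * elev_mx n3 n1 (pmx p3) i l)).
  - by lia.
  - apply: additive_bform => a b a01 b01.
    rewrite !bformD !bformZ -!bform_elev ?addrA ?Hd //; lia.
  - move=> i _; under eq_bigr do rewrite mulrDl -!mulrA.
    by rewrite big_split /= -!mulr_sumr !sum_elev_mx_lead ?mulr0 ?addr0 //; lia.
apply: (bform_pmx2_dep (d2 := d2) (d3 := d3) neq23 n3_gt0 le32).
  by case: d_neq0 => [|d2_neq0|d3_neq0]; [rewrite d1_0 eqxx | left | right].
by move=> a b a01 b01; rewrite -(Hd a b a01 b01) d1_0 mul0r add0r.
Qed.

(** * Gradient polynomials *)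

Lemma horner_dbernstein n i a : (i <= n)%N -> (dbernstein n i).[a] =
  'C(n, i)%:R * (i%:R * a ^+ i.-1 * (1 - a) ^+ (n - i)
                 - (n - i)%:R * a ^+ i * (1 - a) ^+ (n - i).-1).
Proof.
move=> le_in; rewrite /dbernstein /bernstein derivZ derivM derivXn deriv_exp derivB.
by rewrite derivX -polyC1 derivC polyC1 sub0r !(hornerMn, hornerE) /=; ring.
Qed.

Lemma dbernstein_weight n i (a : R) : (i <= n)%N -> 0 < a < 1 ->
  ((n - i)%:R / (1 - a) - i%:R / a) * (a ^+ i * (1 - a) ^+ (n - i))
    / (i`!%:R * (n - i)`!%:R) = - (dbernstein n i).[a] / n`!%:R.
Proof.
move=> le_in /andP [a_gt0 a_lt1].
have a_neq0 : a != 0 by rewrite gt_eqF.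
have a1_neq0 : 1 - a != 0 by rewrite subr_eq0 eq_sym lt_eqF.
have fact_neq0 m : (m`!%:R : R) != 0 by rewrite pnatr_eq0 -lt0n fact_gt0.
have bin_neq0 : ('C(n, i)%:R : R) != 0 by rewrite pnatr_eq0 -lt0n bin_gt0.
have bin_fact : 'C(n, i)%:R * (i`!%:R * (n - i)`!%:R) = n`!%:R :> R.
  by rewrite -!natrM bin_fact.
have Da : i%:R / a * a ^+ i = i%:R * a ^+ i.-1.
  by case: (i) => [|i']; rewrite ?mul0r // exprS /=; field.
have D1a : (n - i)%:R / (1 - a) * (1 - a) ^+ (n - i) = (n - i)%:R * (1 - a) ^+ (n - i).-1.
  by case: (n - i)%N => [|i']; rewrite ?mul0r // exprS /=; field.
rewrite horner_dbernstein // -bin_fact.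
transitivity (((n - i)%:R / (1 - a) * (1 - a) ^+ (n - i) * a ^+ i
    - i%:R / a * a ^+ i * (1 - a) ^+ (n - i)) / (i`!%:R * (n - i)`!%:R)).
  by field; rewrite !fact_neq0 a_neq0 a1_neq0.
by rewrite D1a Da; field; rewrite bin_neq0 !fact_neq0.
Qed.

Definition gradpoly_scale n : R := (n.+1)`!%:R / n`!%:R ^+ 2.

Lemma gradpoly_scale_neq0 n : gradpoly_scale n != 0.
Proof. by rewrite mulf_neq0 ?invr_neq0 ?expf_neq0 // pnatr_eq0 -lt0n fact_gt0. Qed.

End Bernstein.

Lemma gradpoly_bform (R : realType) n (p : 'S_n.+1) (a b : R) : 0 < a < 1 -> 0 < b < 1 ->
  gradpoly_k p a b = gradpoly_scale R n * bform n (pmx R p) a b.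
Proof.
move=> a01 b01; rewrite /gradpoly_k /bform /gradpoly_scale -mulrA; congr (_ * _).
rewrite mulr_sumr; apply: eq_bigr => i _.
rewrite (sum_pmx p i (fun l => (dbernstein R n i).[a] * (dbernstein R n l).[b])).
rewrite /nperm inord_val !subSS.
have le_in : (i <= n)%N by rewrite -ltnS.
have le_pin : (p i <= n)%N by rewrite -ltnS.
have /andP [a_gt0 a_lt1] := a01; have /andP [b_gt0 b_lt1] := b01.
have [a_neq0 b_neq0] : a != 0 /\ b != 0 by rewrite !gt_eqF.
have [a1_neq0 b1_neq0] : 1 - a != 0 /\ 1 - b != 0 by rewrite !subr_eq0 ![1 == _]eq_sym !lt_eqF.
have fact_neq0 m : (m`!%:R : R) != 0 by rewrite pnatr_eq0 -lt0n fact_gt0.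
transitivity (
  (((n - i)%:R / (1 - a) - i%:R / a) * (a ^+ i * (1 - a) ^+ (n - i))
     / (i`!%:R * (n - i)`!%:R)) *
  (((n - p i)%:R / (1 - b) - (p i)%:R / b) * (b ^+ p i * (1 - b) ^+ (n - p i))
     / ((p i)`!%:R * (n - p i)`!%:R))).
  by field; rewrite !fact_neq0 a_neq0 a1_neq0 b_neq0 b1_neq0.
by rewrite !dbernstein_weight //; field; rewrite fact_neq0.
Qed.

Theorem lemma13 (R : realType) (s1 s2 s3 : anyperm) :
  s1 <> s2 -> s1 <> s3 -> s2 <> s3 ->
  (2 <= porder s1)%N -> (2 <= porder s2)%N -> (2 <= porder s3)%N ->
  (porder s2 <= porder s1)%N -> (porder s3 <= porder s2)%N ->
  lin_dep3 R s1 s2 s3 ->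
  (3 < porder s1)%N ->
  porder s2 = 2%N /\ porder s3 = 2%N.
Proof.
case: s1 s2 s3 => [[|n1] p1] [[|n2] p2] [[|n3] p3]; rewrite /porder //=.
move=> neq12 neq13 neq23 _ _ n3_gt0 le21 le32 [c1 [c2 [c3 [c_neq0 Hc]]]] lt3n1.
have [-> ->] : n2 = 1%N /\ n3 = 1%N; last by [].
apply: (bform_pmx3_dep (d1 := c1 * gradpoly_scale R n1) (d2 := c2 * gradpoly_scale R n2)
  (d3 := c3 * gradpoly_scale R n3) neq12 neq13 neq23 lt3n1 n3_gt0 le32 le21).
- by case: c_neq0 => c_neq0; [apply: Or31 | apply: Or32 | apply: Or33];
    rewrite mulf_neq0 ?gradpoly_scale_neq0.
- move=> a b a01 b01; have := Hc a b a01 b01.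
  by rewrite /gradpoly /= !gradpoly_bform // !mulrA.
Qed.
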